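(* For every positive integer $n$, $$LD(P_3\square P_n)\geq\begin{cases} n+1 & \text{if } n\equiv 1 \pmod 3,\\ n & \text{otherwise.}\end{cases}$$
   Context: $P_n$ is the path on $n$ vertices and $\square$ is the Cartesian product of graphs. For a graph $G$, $C\subseteq V(G)$ and $v\in V(G)$ let $I(v)=N[v]\cap C$ ($N[v]$ the closed neighborhood). $C$ is a locating-dominating set if $I(v)\neq\emptyset$ for all $v\in V(G)\setminus C$ and $I(u)\neq I(v)$ for all distinct $u,v\in V(G)\setminus C$. $LD(G)$ is the minimum cardinality of a locating-dominating set of $G$. *)

From mathcomp Require Import all_boot.
Set Implicit Arguments. Unset Strict Implicit. Unset Printing Implicit Defensive.

Section Graphs.
Variable T : finType.
Variable adj : rel T.

Definition closed_nbhd (v : T) : {set T} := [set u | (u == v) || adj v u].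

Definition Iset (C : {set T}) (v : T) : {set T} := closed_nbhd v :&: C.

Definition locating_dominating (C : {set T}) : bool :=
  [forall v, (v \notin C) ==> (Iset C v != set0)] &&
  [forall u, forall v, [&& u \notin C, v \notin C & u != v] ==> (Iset C u != Iset C v)].

(* LD(G): minimum cardinality of a locating-dominating set. The whole vertex
   set is always locating-dominating, so #|T| is a valid default. *)
Definition LD : nat := \big[minn/#|T|]_(C : {set T} | locating_dominating C) #|C|.
End Graphs.

Definition path_adj (n : nat) : rel 'I_n :=
  fun i j => (i.+1 == j :> nat) || (j.+1 == i :> nat).

Definition cart_adj (A B : finType) (a : rel A) (b : rel B) : rel (A * B) :=
  fun x y => ((x.1 == y.1) && b x.2 y.2) || (a x.1 y.1 && (x.2 == y.2)).

Definition grid_adj (m n : nat) : rel ('I_m * 'I_n)%type :=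
  cart_adj (@path_adj m) (@path_adj n).
Arguments grid_adj : clear implicits.

From mathcomp Require Import all_boot zify.
Set Implicit Arguments. Unset Strict Implicit. Unset Printing Implicit Defensive.

(* Record an LD set C of P_3 □ P_n column by column, as a 3-bit
   mask per column.  Whether the LD conditions hold at the vertices of one
   column is decided by a window of four consecutive columns, so C becomes a
   walk in a finite automaton whose states are triples of consecutive columns.
   A potential on these states, refined by the column index mod 3 and checked
   by computation, starts at 3, loses at most |C ∩ column| - 1 at each step,
   and is at least 3 + [n = 1 mod 3] at the end; summing along the walk gives
   |C| >= n + [n = 1 mod 3]. *)

Section LocatingDominating.
Variables (T : finType) (adj : rel T).

Lemma locating_dominating_setT : locating_dominating adj setT.
Proof. by apply/andP; split; apply/forallP => v; [|apply/forallP => w]; rewrite in_setT. Qed.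

Lemma LD_lower_bound k :
  (forall C, locating_dominating adj C -> k <= #|C|) -> k <= LD adj.
Proof.
move=> hC; rewrite /LD; elim/big_ind: _ => [||C /hC] //.
  by rewrite -cardsT; apply/hC/locating_dominating_setT.
by move=> x y hx hy; rewrite leq_min hx hy.
Qed.

Variable C : {set T}.
Hypothesis hC : locating_dominating adj C.

Lemma ld_Iset_neq0 v : Iset adj C v != set0.
Proof.
have [vC|vNC] := boolP (v \in C).
  by apply/set0Pn; exists v; rewrite /Iset /closed_nbhd !inE eqxx.
by move: hC => /andP[/forallP/(_ v)/implyP/(_ vNC) ->].
Qed.

Lemma ld_Iset_inj u v :
  u \notin C -> v \notin C -> Iset adj C u = Iset adj C v -> u = v.
Proof.
move=> uNC vNC eqI; apply/eqP/negPn/negP => neq_uv.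
move: hC => /andP[_ /forallP/(_ u)/forallP/(_ v)/implyP].
by rewrite uNC vNC neq_uv eqI eqxx => /(_ isT).
Qed.

End LocatingDominating.

(* A column is coded by the mask x < 8 of its rows that lie in C; the code
   [absent] stands for a column outside the grid. *)
Definition absent : nat := 8.

Definition col_bit (x r : nat) : bool := (r < 3) && odd (x %/ 2 ^ r).

Lemma col_bit_absent r : col_bit absent r = false.
Proof. by case: r => [|[|[|r]]]. Qed.

Definition col_size (x : nat) : nat := count (col_bit x) (iota 0 3).

Definition adjn (i j : nat) : bool := (i.+1 == j) || (j.+1 == i).

Definition grid_near (p q : nat * nat) : bool :=
  [|| p == q, (q.1 == p.1) && adjn q.2 p.2 | adjn q.1 p.1 && (q.2 == p.2)].

Lemma grid_near_shift t p q :
  grid_near (p.1, p.2 + t) (q.1, q.2 + t) = grid_near p q.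
Proof.
case: p q => [a b] [c d]; rewrite /grid_near /adjn /= !xpair_eqE.
by rewrite -!addSn !eqn_add2r.
Qed.

Definition window (col : nat -> nat) (m : nat) : seq nat :=
  [:: col m; col m.+1; col m.+2; col m.+3].

Lemma nth_window col m k : k < 4 -> nth absent (window col m) k = col (m + k).
Proof. by case: k => [|[|[|[|k]]]] //; rewrite ?addn0 ?addn1 ?addn2 ?addn3. Qed.

(* Cells (r, k) of a window are (row, column) pairs; [window_ok W] holds when
   the vertices of column 1 are dominated and those outside C in column 1 are
   separated from those in columns 1 and 2.  All their neighbours lie in the
   window, so this is a consequence of C being locating-dominating. *)
Definition window_cells : seq (nat * nat) := [seq (r, k) | r <- iota 0 3, k <- iota 0 4].

Definition in_window (W : seq nat) (p : nat * nat) : bool := col_bit (nth absent W p.2) p.1.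

Definition window_Iset (W : seq nat) (p : nat * nat) : seq (nat * nat) :=
  [seq w <- window_cells | in_window W w && grid_near w p].

Definition window_ok (W : seq nat) : bool :=
  (nth absent W 1 == absent) ||
  all (fun r =>
    (window_Iset W (r, 1) != [::]) &&
    all (fun r' => all (fun k =>
      [|| in_window W (r, 1), in_window W (r', k), (r, 1) == (r', k),
          nth absent W k == absent | window_Iset W (r, 1) != window_Iset W (r', k)])
      (iota 1 2)) (iota 0 3))
  (iota 0 3).

(* The potential of the state (a, b, c, r): the codes a, b, c of three
   consecutive columns and the index mod 3 of the column after c.  It was
   computed offline; 0 marks states that no LD set reaches. *)
Definition potential_table : seq (seq nat) :=
  [:: [:: 2; 2; 1; 3; 3; 2; 3; 3; 2; 4; 4; 3; 3; 3; 2; 4; 4; 3; 4; 4; 3; 5; 5; 4; 0; 0; 0];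
     [:: 3; 3; 2; 4; 4; 3; 3; 4; 3; 4; 5; 4; 4; 4; 3; 5; 5; 4; 4; 5; 4; 5; 6; 5; 0; 0; 0];
     [:: 3; 3; 2; 4; 4; 3; 4; 4; 3; 5; 5; 4; 4; 4; 3; 5; 4; 4; 5; 5; 4; 6; 5; 5; 0; 0; 0];
     [:: 3; 3; 3; 4; 4; 4; 4; 4; 4; 5; 5; 5; 4; 4; 4; 5; 5; 5; 5; 5; 5; 6; 6; 6; 0; 0; 0];
     [:: 3; 3; 2; 4; 4; 3; 3; 4; 3; 4; 5; 4; 4; 4; 3; 5; 5; 4; 4; 5; 4; 5; 6; 5; 0; 0; 0];
     [:: 3; 4; 3; 4; 5; 4; 4; 5; 4; 5; 6; 5; 4; 5; 4; 5; 6; 5; 5; 6; 5; 6; 7; 6; 0; 0; 0];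
     [:: 3; 3; 3; 4; 4; 4; 4; 4; 4; 5; 5; 5; 4; 4; 4; 5; 5; 5; 5; 5; 5; 6; 6; 6; 0; 0; 0];
     [:: 3; 4; 4; 4; 5; 5; 4; 5; 5; 5; 6; 6; 4; 5; 5; 5; 6; 6; 5; 6; 6; 6; 7; 7; 0; 0; 0];
     [:: 0; 0; 0; 0; 0; 0; 0; 0; 0; 0; 0; 0; 0; 0; 0; 0; 0; 0; 0; 0; 0; 0; 0; 0; 0; 0; 0];
     [:: 2; 3; 2; 3; 3; 3; 3; 4; 3; 4; 4; 4; 3; 4; 3; 4; 4; 4; 4; 5; 4; 5; 5; 5; 0; 0; 0];
     [:: 3; 3; 3; 4; 4; 4; 4; 4; 4; 5; 5; 5; 4; 4; 4; 5; 5; 5; 5; 5; 5; 6; 6; 6; 0; 0; 0];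
     [:: 3; 3; 3; 4; 4; 4; 4; 4; 4; 5; 5; 5; 4; 4; 4; 5; 5; 5; 5; 5; 5; 6; 6; 6; 0; 0; 0];
     [:: 4; 4; 4; 5; 5; 5; 5; 5; 5; 6; 6; 6; 5; 5; 5; 6; 6; 6; 6; 6; 6; 7; 7; 7; 0; 0; 0];
     [:: 3; 4; 3; 4; 4; 4; 4; 4; 4; 4; 5; 5; 4; 5; 4; 5; 5; 5; 5; 5; 5; 5; 6; 6; 0; 0; 0];
     [:: 3; 4; 4; 4; 5; 5; 4; 5; 5; 5; 6; 6; 4; 5; 5; 5; 6; 6; 5; 6; 6; 6; 7; 7; 0; 0; 0];
     [:: 4; 3; 4; 4; 4; 5; 5; 4; 5; 5; 5; 6; 5; 4; 5; 5; 5; 6; 6; 5; 6; 6; 6; 7; 0; 0; 0];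
     [:: 4; 4; 5; 5; 5; 6; 5; 5; 6; 6; 6; 7; 5; 5; 6; 6; 6; 7; 6; 6; 7; 7; 7; 8; 0; 0; 0];
     [:: 0; 0; 0; 0; 0; 0; 0; 0; 0; 0; 0; 0; 0; 0; 0; 0; 0; 0; 0; 0; 0; 0; 0; 0; 0; 0; 0];
     [:: 3; 2; 2; 4; 3; 3; 3; 3; 3; 4; 4; 4; 4; 3; 3; 5; 4; 4; 4; 4; 4; 5; 5; 5; 0; 0; 0];
     [:: 3; 3; 3; 4; 4; 4; 3; 4; 4; 4; 5; 5; 4; 4; 4; 5; 5; 5; 4; 5; 5; 5; 6; 6; 0; 0; 0];
     [:: 3; 3; 3; 4; 4; 4; 4; 4; 4; 5; 5; 5; 4; 4; 4; 5; 5; 5; 5; 5; 5; 6; 6; 6; 0; 0; 0];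
     [:: 3; 4; 4; 4; 5; 5; 4; 5; 5; 5; 6; 6; 4; 5; 5; 5; 6; 6; 5; 6; 6; 6; 7; 7; 0; 0; 0];
     [:: 3; 3; 3; 4; 4; 4; 3; 4; 4; 4; 5; 5; 4; 4; 4; 5; 5; 5; 4; 5; 5; 5; 6; 6; 0; 0; 0];
     [:: 3; 4; 3; 4; 5; 4; 4; 5; 4; 5; 6; 5; 4; 5; 4; 5; 6; 5; 5; 6; 5; 6; 7; 6; 0; 0; 0];
     [:: 3; 4; 4; 4; 5; 5; 4; 5; 5; 5; 6; 6; 4; 5; 5; 5; 6; 6; 5; 6; 6; 6; 7; 7; 0; 0; 0];
     [:: 4; 5; 4; 5; 6; 5; 5; 6; 5; 6; 7; 6; 5; 6; 5; 6; 7; 6; 6; 7; 6; 7; 8; 7; 0; 0; 0];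
     [:: 0; 0; 0; 0; 0; 0; 0; 0; 0; 0; 0; 0; 0; 0; 0; 0; 0; 0; 0; 0; 0; 0; 0; 0; 0; 0; 0];
     [:: 3; 3; 2; 4; 4; 3; 3; 3; 3; 4; 4; 4; 4; 4; 3; 5; 5; 4; 4; 4; 4; 5; 5; 5; 0; 0; 0];
     [:: 3; 3; 3; 4; 4; 4; 4; 4; 4; 5; 5; 5; 4; 4; 4; 5; 5; 5; 5; 5; 5; 6; 6; 6; 0; 0; 0];
     [:: 3; 3; 3; 4; 4; 4; 4; 4; 4; 5; 5; 5; 4; 4; 4; 5; 5; 5; 5; 5; 5; 6; 6; 6; 0; 0; 0];
     [:: 4; 4; 4; 5; 5; 5; 5; 5; 5; 6; 6; 6; 5; 5; 5; 6; 6; 6; 6; 6; 6; 7; 7; 7; 0; 0; 0];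
     [:: 4; 3; 3; 5; 4; 4; 4; 4; 4; 5; 5; 5; 5; 4; 4; 6; 5; 5; 5; 5; 5; 6; 6; 6; 0; 0; 0];
     [:: 4; 4; 4; 5; 5; 5; 5; 5; 5; 6; 6; 6; 5; 5; 5; 6; 6; 6; 6; 6; 6; 7; 7; 7; 0; 0; 0];
     [:: 4; 4; 4; 5; 5; 5; 5; 5; 5; 6; 6; 6; 5; 5; 5; 6; 6; 6; 6; 6; 6; 7; 7; 7; 0; 0; 0];
     [:: 5; 5; 5; 6; 6; 6; 6; 6; 6; 7; 7; 7; 6; 6; 6; 7; 7; 7; 7; 7; 7; 8; 8; 8; 0; 0; 0];
     [:: 0; 0; 0; 0; 0; 0; 0; 0; 0; 0; 0; 0; 0; 0; 0; 0; 0; 0; 0; 0; 0; 0; 0; 0; 0; 0; 0];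
     [:: 2; 3; 2; 3; 4; 3; 3; 4; 3; 4; 5; 4; 3; 3; 3; 4; 4; 4; 4; 4; 4; 5; 5; 5; 0; 0; 0];
     [:: 3; 4; 3; 4; 5; 4; 4; 4; 4; 5; 5; 5; 4; 4; 4; 5; 5; 5; 4; 5; 5; 5; 6; 6; 0; 0; 0];
     [:: 3; 3; 3; 4; 4; 4; 4; 4; 4; 5; 5; 5; 4; 4; 4; 5; 5; 5; 5; 5; 5; 6; 6; 6; 0; 0; 0];
     [:: 4; 3; 4; 5; 4; 5; 5; 4; 5; 6; 5; 6; 4; 4; 5; 5; 5; 6; 5; 5; 6; 6; 6; 7; 0; 0; 0];
     [:: 3; 3; 3; 4; 4; 4; 4; 4; 4; 5; 5; 5; 4; 4; 4; 5; 5; 5; 5; 5; 5; 6; 6; 6; 0; 0; 0];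
     [:: 3; 4; 4; 4; 5; 5; 4; 5; 5; 5; 6; 6; 4; 5; 5; 5; 6; 6; 5; 6; 6; 6; 7; 7; 0; 0; 0];
     [:: 4; 4; 4; 5; 5; 5; 5; 5; 5; 6; 6; 6; 5; 5; 5; 6; 6; 6; 6; 6; 6; 7; 7; 7; 0; 0; 0];
     [:: 4; 4; 5; 5; 5; 6; 5; 5; 6; 6; 6; 7; 5; 5; 6; 6; 6; 7; 6; 6; 7; 7; 7; 8; 0; 0; 0];
     [:: 0; 0; 0; 0; 0; 0; 0; 0; 0; 0; 0; 0; 0; 0; 0; 0; 0; 0; 0; 0; 0; 0; 0; 0; 0; 0; 0];
     [:: 2; 2; 3; 3; 3; 4; 3; 3; 4; 4; 4; 5; 3; 3; 4; 4; 4; 5; 4; 4; 5; 5; 5; 6; 0; 0; 0];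
     [:: 3; 3; 4; 4; 4; 5; 4; 4; 5; 5; 5; 6; 4; 4; 5; 5; 5; 6; 5; 5; 6; 6; 6; 7; 0; 0; 0];
     [:: 3; 3; 4; 4; 4; 5; 4; 4; 5; 5; 5; 6; 4; 4; 5; 5; 5; 6; 5; 5; 6; 6; 6; 7; 0; 0; 0];
     [:: 4; 4; 5; 5; 5; 6; 5; 5; 6; 6; 6; 7; 5; 5; 6; 6; 6; 7; 6; 6; 7; 7; 7; 8; 0; 0; 0];
     [:: 3; 3; 4; 4; 4; 5; 4; 4; 5; 5; 5; 6; 4; 4; 5; 5; 5; 6; 5; 5; 6; 6; 6; 7; 0; 0; 0];
     [:: 4; 4; 5; 5; 5; 6; 5; 5; 6; 6; 6; 7; 5; 5; 6; 6; 6; 7; 6; 6; 7; 7; 7; 8; 0; 0; 0];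
     [:: 4; 4; 5; 5; 5; 6; 5; 5; 6; 6; 6; 7; 5; 5; 6; 6; 6; 7; 6; 6; 7; 7; 7; 8; 0; 0; 0];
     [:: 5; 5; 6; 6; 6; 7; 6; 6; 7; 7; 7; 8; 6; 6; 7; 7; 7; 8; 7; 7; 8; 8; 8; 9; 0; 0; 0];
     [:: 0; 0; 0; 0; 0; 0; 0; 0; 0; 0; 0; 0; 0; 0; 0; 0; 0; 0; 0; 0; 0; 0; 0; 0; 0; 0; 0];
     [:: 3; 3; 2; 4; 4; 3; 3; 3; 3; 4; 4; 4; 4; 4; 3; 5; 5; 4; 4; 4; 4; 5; 5; 5; 0; 0; 0];
     [:: 4; 3; 3; 5; 4; 4; 4; 4; 4; 5; 5; 5; 5; 4; 4; 6; 5; 5; 5; 5; 5; 6; 6; 6; 0; 0; 0];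
     [:: 3; 3; 3; 4; 4; 4; 4; 4; 4; 5; 5; 5; 4; 4; 4; 5; 5; 5; 5; 5; 5; 6; 6; 6; 0; 0; 0];
     [:: 4; 4; 4; 5; 5; 5; 5; 5; 5; 6; 6; 6; 5; 5; 5; 6; 6; 6; 6; 6; 6; 7; 7; 7; 0; 0; 0];
     [:: 3; 3; 3; 4; 4; 4; 4; 4; 4; 5; 5; 5; 4; 4; 4; 5; 5; 5; 5; 5; 5; 6; 6; 6; 0; 0; 0];
     [:: 4; 4; 4; 5; 5; 5; 5; 5; 5; 6; 6; 6; 5; 5; 5; 6; 6; 6; 6; 6; 6; 7; 7; 7; 0; 0; 0];
     [:: 4; 4; 4; 5; 5; 5; 5; 5; 5; 6; 6; 6; 5; 5; 5; 6; 6; 6; 6; 6; 6; 7; 7; 7; 0; 0; 0];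
     [:: 5; 5; 5; 6; 6; 6; 6; 6; 6; 7; 7; 7; 6; 6; 6; 7; 7; 7; 7; 7; 7; 8; 8; 8; 0; 0; 0];
     [:: 0; 0; 0; 0; 0; 0; 0; 0; 0; 0; 0; 0; 0; 0; 0; 0; 0; 0; 0; 0; 0; 0; 0; 0; 0; 0; 0];
     [:: 3; 2; 3; 4; 3; 4; 4; 3; 4; 5; 4; 5; 4; 3; 4; 5; 4; 5; 5; 4; 5; 6; 5; 6; 0; 0; 0];
     [:: 4; 3; 4; 5; 4; 5; 5; 4; 5; 6; 5; 6; 5; 4; 5; 6; 5; 6; 6; 5; 6; 7; 6; 7; 0; 0; 0];
     [:: 4; 3; 4; 5; 4; 5; 5; 4; 5; 6; 5; 6; 5; 4; 5; 6; 5; 6; 6; 5; 6; 7; 6; 7; 0; 0; 0];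
     [:: 5; 4; 5; 6; 5; 6; 6; 5; 6; 7; 6; 7; 6; 5; 6; 7; 6; 7; 7; 6; 7; 8; 7; 8; 0; 0; 0];
     [:: 4; 3; 4; 5; 4; 5; 5; 4; 5; 6; 5; 6; 5; 4; 5; 6; 5; 6; 6; 5; 6; 7; 6; 7; 0; 0; 0];
     [:: 5; 4; 5; 6; 5; 6; 6; 5; 6; 7; 6; 7; 6; 5; 6; 7; 6; 7; 7; 6; 7; 8; 7; 8; 0; 0; 0];
     [:: 5; 4; 5; 6; 5; 6; 6; 5; 6; 7; 6; 7; 6; 5; 6; 7; 6; 7; 7; 6; 7; 8; 7; 8; 0; 0; 0];
     [:: 6; 5; 6; 7; 6; 7; 7; 6; 7; 8; 7; 8; 7; 6; 7; 8; 7; 8; 8; 7; 8; 9; 8; 9; 0; 0; 0];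
     [:: 0; 0; 0; 0; 0; 0; 0; 0; 0; 0; 0; 0; 0; 0; 0; 0; 0; 0; 0; 0; 0; 0; 0; 0; 0; 0; 0];
     [:: 0; 0; 1; 0; 0; 2; 0; 0; 2; 0; 0; 3; 0; 0; 2; 0; 0; 3; 0; 0; 3; 0; 0; 4; 0; 0; 0];
     [:: 0; 0; 2; 0; 0; 3; 0; 0; 3; 0; 0; 4; 0; 0; 3; 0; 0; 4; 0; 0; 4; 0; 0; 5; 0; 0; 0];
     [:: 0; 0; 2; 0; 0; 3; 0; 0; 3; 0; 0; 4; 0; 0; 3; 0; 0; 4; 0; 0; 4; 0; 0; 5; 0; 0; 0];
     [:: 0; 0; 3; 0; 0; 4; 0; 0; 4; 0; 0; 5; 0; 0; 4; 0; 0; 5; 0; 0; 5; 0; 0; 6; 0; 0; 0];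
     [:: 0; 0; 2; 0; 0; 3; 0; 0; 3; 0; 0; 4; 0; 0; 3; 0; 0; 4; 0; 0; 4; 0; 0; 5; 0; 0; 0];
     [:: 0; 0; 3; 0; 0; 4; 0; 0; 4; 0; 0; 5; 0; 0; 4; 0; 0; 5; 0; 0; 5; 0; 0; 6; 0; 0; 0];
     [:: 0; 0; 3; 0; 0; 4; 0; 0; 4; 0; 0; 5; 0; 0; 4; 0; 0; 5; 0; 0; 5; 0; 0; 6; 0; 0; 0];
     [:: 0; 0; 4; 0; 0; 5; 0; 0; 5; 0; 0; 6; 0; 0; 5; 0; 0; 6; 0; 0; 6; 0; 0; 7; 0; 0; 0];
     [:: 0; 2; 0; 0; 3; 0; 0; 3; 0; 0; 4; 0; 0; 3; 0; 0; 4; 0; 0; 4; 0; 0; 5; 0; 3; 0; 0]].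

Definition potential (a b c r : nat) : nat :=
  if [&& a < 9, b < 9, c < 9 & r < 3]
  then nth 0 (nth [::] potential_table (a * 9 + b)) (c * 3 + r) else 0.

Definition potential_step_check : bool :=
  all (fun a => all (fun b => all (fun c => all (fun r =>
    (potential a b c r == 0) || all (fun x =>
       ~~ window_ok [:: a; b; c; x] ||
       (potential b c x (r.+1 %% 3) != 0) &&
       (potential b c x (r.+1 %% 3) + 1 <= potential a b c r + col_size x))
      (iota 0 8))
  (iota 0 3)) (iota 0 9)) (iota 0 9)) (iota 0 9).

Definition potential_final_check : bool :=
  all (fun a => all (fun b => all (fun c => all (fun r =>
    [|| potential a b c r == 0,
        ~~ (window_ok [:: a; b; c; absent] && window_ok [:: b; c; absent; absent])
      | 3 + (r == 1) <= potential a b c r])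
  (iota 0 3)) (iota 0 9)) (iota 0 9)) (iota 0 9).

Lemma potential_step_checked : potential_step_check.
Proof. by vm_compute. Qed.

Lemma potential_final_checked : potential_final_check.
Proof. by vm_compute. Qed.

Lemma potential_start : potential absent absent absent 0 = 3.
Proof. by vm_compute. Qed.

Lemma potential_neq0 a b c r :
  potential a b c r != 0 -> [&& a < 9, b < 9, c < 9 & r < 3].
Proof. by rewrite /potential; case: ifP => // _; rewrite eqxx. Qed.

Lemma all_iota0 (P : pred nat) k i : i < k -> all P (iota 0 k) -> P i.
Proof. by move=> hi /allP; apply; rewrite mem_iota. Qed.

Lemma potential_step a b c r x :
  potential a b c r != 0 -> window_ok [:: a; b; c; x] -> x < 8 ->
  potential b c x (r.+1 %% 3) != 0 /\
  potential b c x (r.+1 %% 3) + 1 <= potential a b c r + col_size x.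
Proof.
move=> hp hW hx; have /and4P[ha hb hc hr] := potential_neq0 hp.
move: potential_step_checked; rewrite /potential_step_check
  => /(all_iota0 ha) /(all_iota0 hb) /(all_iota0 hc) /(all_iota0 hr).
by rewrite (negbTE hp) => /(all_iota0 hx); rewrite hW => /andP.
Qed.

Lemma potential_final a b c r :
  potential a b c r != 0 ->
  window_ok [:: a; b; c; absent] -> window_ok [:: b; c; absent; absent] ->
  3 + (r == 1) <= potential a b c r.
Proof.
move=> hp hW1 hW2; have /and4P[ha hb hc hr] := potential_neq0 hp.
move: potential_final_checked; rewrite /potential_final_check
  => /(all_iota0 ha) /(all_iota0 hb) /(all_iota0 hc) /(all_iota0 hr).
by rewrite (negbTE hp) hW1 hW2.
Qed.

(* Column i + 3 of [col] is column i of a grid with n columns. *)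
Section ColumnSequences.
Variables (n : nat) (col : nat -> nat).
Hypothesis col_absent : forall i, (i < 3) || (n + 3 <= i) -> col i = absent.
Hypothesis col_present : forall i, 3 <= i < n + 3 -> col i < 8.
Hypothesis col_window_ok : forall m, window_ok (window col m).

Let pot (m : nat) : nat := potential (col m) (col m.+1) (col m.+2) (m %% 3).

Lemma potential_chain m :
  m <= n -> pot m != 0 /\ pot m + m <= 3 + \sum_(0 <= i < m) col_size (col (i + 3)).
Proof.
elim: m => [_|m IH lt_mn].
  by rewrite /pot !col_absent // potential_start big_geq.
have [pot_m sum_m] := IH (ltnW lt_mn).
have present : col m.+3 < 8 by apply: col_present; lia.
have [] := potential_step pot_m (col_window_ok m) present.
rewrite -[(m %% 3).+1]addn1 modnDml addn1 -/(pot m.+1) -/(pot m) => pot_m1 step.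
suff -> : \sum_(0 <= i < m.+1) col_size (col (i + 3)) =
          \sum_(0 <= i < m) col_size (col (i + 3)) + col_size (col m.+3).
  by split=> //; lia.
by rewrite big_nat_recr //= addn3.
Qed.

Lemma column_sequence_bound :
  (if n %% 3 == 1 then n.+1 else n) <= \sum_(0 <= i < n) col_size (col (i + 3)).
Proof.
have [pot_n sum_n] := potential_chain (leqnn n).
have col_n3 : col n.+3 = absent by apply: col_absent; lia.
have col_n4 : col n.+4 = absent by apply: col_absent; lia.
have W1 := col_window_ok n; have W2 := col_window_ok n.+1.
rewrite /window col_n3 in W1 W2; rewrite col_n4 in W2.
have := potential_final pot_n W1 W2; rewrite -/(pot n).
by case: (n %% 3 == 1) => /=; lia.
Qed.

End ColumnSequences.

Section GridColumns.
Variable n : nat.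
Local Notation vertex := ('I_3 * 'I_n)%type.
Local Notation N := (closed_nbhd (grid_adj 3 n)).
Variable C : {set vertex}.
Local Notation I := (Iset (grid_adj 3 n) C).

Definition in_C (r j : nat) : bool :=
  [exists v in C, (v.1 == r :> nat) && (v.2 == j :> nat)].

Definition column_code (j : nat) : nat := in_C 0 j + 2 * in_C 1 j + 4 * in_C 2 j.

Definition padded_code (i : nat) : nat :=
  if 3 <= i < n + 3 then column_code (i - 3) else absent.

Local Notation W := (window padded_code).

Lemma in_C_vertex (v : vertex) : in_C v.1 v.2 = (v \in C).
Proof.
apply/existsP/idP => [[w /and3P[wC /eqP e1 /eqP e2]]|vC]; last by exists v; rewrite vC !eqxx.
by have -> : v = w by case: v w e1 e2 wC => [a b] [c d] /= /val_inj -> /val_inj ->.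
Qed.

Lemma in_C_bound r j : in_C r j -> (r < 3) && (j < n).
Proof. by case/existsP=> -[a b] /and3P[_ /eqP <- /eqP <-]; rewrite !ltn_ord. Qed.

Lemma col_bit_column_code j r : col_bit (column_code j) r = in_C r j.
Proof.
rewrite /col_bit /column_code.
case: r => [|[|[|r]]]; try by case: (in_C 0 j); case: (in_C 1 j); case: (in_C 2 j).
by case h: (in_C r.+3 j) => //; move: (in_C_bound h).
Qed.

Lemma column_code_lt j : column_code j < 8.
Proof. by rewrite /column_code; case: (in_C 0 j); case: (in_C 1 j); case: (in_C 2 j). Qed.

Lemma padded_code_absent i : (i < 3) || (n + 3 <= i) -> padded_code i = absent.
Proof. by rewrite /padded_code; case: ifP => // /andP[]; lia. Qed.

Lemma padded_code_lt i : 3 <= i < n + 3 -> padded_code i < 8.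
Proof. by rewrite /padded_code => ->; apply: column_code_lt. Qed.

Lemma padded_code_present i : padded_code i != absent -> 3 <= i < n + 3.
Proof. by rewrite /padded_code; case: ifP. Qed.

Lemma col_bit_padded_code i r :
  col_bit (padded_code i) r = (3 <= i) && in_C r (i - 3).
Proof.
rewrite /padded_code; case: ifP => [/andP[-> _]|]; first exact: col_bit_column_code.
rewrite col_bit_absent; case: (leqP 3 i) => //= h3 hn.
by apply/esym/negbTE/negP => /in_C_bound/andP[_]; lia.
Qed.

Lemma sum_col_size : \sum_(0 <= i < n) col_size (padded_code (i + 3)) = #|C|.
Proof.
have -> : #|C| = \sum_(r < 3) \sum_(j < n) ((r, j) \in C : nat).
  rewrite pair_bigA /= -sum1_card big_mkcond /=.
  by apply: eq_bigr => -[a b] _; case: ifP.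
rewrite exchange_big /= big_mkord; apply: eq_bigr => j _.
rewrite !big_ord_recl big_ord0 addn0 /col_size /= !col_bit_padded_code.
by rewrite leq_addl addnK addn0 -!(in_C_vertex (_, j)).
Qed.

Lemma mem_grid_nbhd (u w : vertex) :
  (w \in N u) = grid_near (w.1 : nat, w.2 : nat) (u.1 : nat, u.2 : nat).
Proof.
case: w u => [a b] [c d]; rewrite inE /grid_adj /cart_adj /path_adj /grid_near /adjn /=.
by rewrite xpair_eqE -!val_eqE.
Qed.

Lemma grid_nbhd_columns (u w : vertex) : w \in N u -> w.2 <= u.2.+1 /\ u.2 <= w.2.+1.
Proof.
rewrite mem_grid_nbhd /grid_near /adjn /= !xpair_eqE.
by case/or3P=> [/andP[_ /eqP->]|/andP[_ /orP[]/eqP<-]|/andP[_ /eqP->]]; split; lia.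
Qed.

Definition to_window (m : nat) (v : vertex) : nat * nat := (v.1 : nat, v.2 + 3 - m).

Lemma in_window_vertex m (v : vertex) :
  m <= v.2 + 3 <= m + 3 -> in_window (W m) (to_window m v) = (v \in C).
Proof.
move=> /andP[h1 h2]; rewrite /in_window nth_window /=; last by lia.
by rewrite subnKC // col_bit_padded_code leq_addl addnK in_C_vertex.
Qed.

Lemma to_window_cell m (v : vertex) :
  m <= v.2 + 3 <= m + 3 -> to_window m v \in window_cells.
Proof.
move=> /andP[h1 h2]; apply/allpairsP; exists (v.1 : nat, v.2 + 3 - m).
by rewrite !mem_iota /= ltn_ord; split=> //; lia.
Qed.

Lemma grid_near_to_window m (w u : vertex) : m <= w.2 + 3 -> m <= u.2 + 3 ->
  grid_near (to_window m w) (to_window m u) = (w \in N u).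
Proof.
move=> hw hu; rewrite mem_grid_nbhd -(grid_near_shift 3 (w.1 : nat, _)).
by rewrite -(grid_near_shift m (to_window m w)) /= !subnK.
Qed.

Lemma mem_window_Iset m (u w : vertex) : m <= u.2 + 3 -> m <= w.2 + 3 <= m + 3 ->
  (to_window m w \in window_Iset (W m) (to_window m u)) = (w \in I u).
Proof.
move=> hu hw; have /andP[hw1 _] := hw.
rewrite mem_filter in_window_vertex // grid_near_to_window // to_window_cell //.
by rewrite /Iset in_setI andbT andbC.
Qed.

Lemma window_Iset_neq_nil m (u : vertex) : m <= u.2 + 2 <= m + 1 ->
  I u != set0 -> window_Iset (W m) (to_window m u) != [::].
Proof.
move=> /andP[hu1 hu2] /set0Pn ex_w.
have [w wIu] : exists w : vertex, w \in I u := ex_w.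
have := wIu; rewrite in_setI => /andP[/grid_nbhd_columns[hw1 hw2] _].
have hw : m <= w.2 + 3 <= m + 3 by lia.
by apply/eqP => Inil; move: wIu; rewrite -(@mem_window_Iset m) ?Inil //; lia.
Qed.

Lemma window_Iset_eq m (u v : vertex) :
  m <= u.2 + 2 <= m + 1 -> m <= v.2 + 2 <= m + 1 ->
  window_Iset (W m) (to_window m u) = window_Iset (W m) (to_window m v) -> I u = I v.
Proof.
have sub (x y : vertex) : m <= x.2 + 2 <= m + 1 -> m <= y.2 + 2 <= m + 1 ->
    window_Iset (W m) (to_window m x) = window_Iset (W m) (to_window m y) ->
    forall w : vertex, w \in I x -> w \in I y.
  move=> /andP[hx1 hx2] /andP[hy1 _] eq_I w wIx.
  have := wIx; rewrite in_setI => /andP[/grid_nbhd_columns[hw1 hw2] _].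
  have hw : m <= w.2 + 3 <= m + 3 by lia.
  have hx : m <= x.2 + 3 by lia.
  have hy : m <= y.2 + 3 by lia.
  by rewrite -(mem_window_Iset hy hw) -eq_I (mem_window_Iset hx hw).
move=> hu hv eq_I; apply/setP => w; apply/idP/idP.
  exact: sub hu hv eq_I w.
exact: sub hv hu (esym eq_I) w.
Qed.

Lemma window_vertex m r k : r < 3 -> k < 4 -> nth absent (W m) k != absent ->
  exists2 v : vertex, to_window m v = (r, k) & v.2 + 3 = m + k.
Proof.
move=> hr hk; rewrite nth_window // => /padded_code_present /andP[h1 h2].
have hj : m + k - 3 < n by lia.
exists (Ordinal hr, Ordinal hj); rewrite /to_window /=; last by lia.
by congr pair; lia.
Qed.

Hypothesis hC : locating_dominating (grid_adj 3 n) C.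

Lemma window_ok_padded m : window_ok (W m).
Proof.
rewrite /window_ok; have [//|present1] := eqVneq (nth absent (W m) 1) absent.
apply/allP => r; rewrite mem_iota => /andP[_ hr].
have [U <- hU] := window_vertex hr (isT : 1 < 4) present1.
apply/andP; split; first by apply: window_Iset_neq_nil (ld_Iset_neq0 hC U); lia.
apply/allP => r'; rewrite mem_iota => /andP[_ hr'].
apply/allP => k; rewrite mem_iota => /andP[hk1 hk2].
have [_|presentk] := eqVneq (nth absent (W m) k) absent; first by rewrite !orbT.
have hk : k < 4 by lia.
have [V <- hV] := window_vertex hr' hk presentk.
rewrite !in_window_vertex; try lia.
have [//|UNC] := boolP (U \in C); have [//|VNC] := boolP (V \in C).
have [//|neq_UV] := eqVneq (to_window m U) (to_window m V).
rewrite !orFb; apply/negP => /eqP eq_I; move/eqP: neq_UV; apply; congr to_window.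
by apply: (ld_Iset_inj hC UNC VNC); apply: (window_Iset_eq _ _ eq_I); lia.
Qed.

End GridColumns.

Theorem lemma4p13 (n : nat) : 0 < n ->
  LD (grid_adj 3 n) >= (if n %% 3 == 1 then n.+1 else n).
Proof.
(* The bound holds for n = 0 as well. *)
move=> _; apply: LD_lower_bound => C hC.
rewrite -(sum_col_size C); apply: column_sequence_bound => i.
- exact: padded_code_absent.
- exact: padded_code_lt.
- exact: window_ok_padded.
Qed.
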